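(* Let $\mathscr{L}$ be the rooted transition system with a single state $a$, transition $a\to a$, and initial state $a$, and let $\mathscr{C}$ be the rooted transition system with states $\{x,y\}$, transitions $x\to y$, $y\to x$, and initial state $x$. Then $R=\{(a,x),(a,y)\}$ is a relational bisimulation between $\mathscr{L}$ and $\mathscr{C}$ containing the pair of initial states, but there is no functional bisimulation between $\mathscr{L}$ and $\mathscr{C}$. In particular, functional bisimulation is strictly stronger than relational bisimulation.
   Context: A rooted transition system consists of a set of states, a binary transition relation $\to$, and an initial state. A simulation $f:\mathscr{M}\to\mathscr{N}$ is a function on states with $s\to s'$ implying $f(s)\to f(s')$ and preserving initial states. A relational bisimulation between $\mathscr{M}$ and $\mathscr{N}$ is a relation $R$ between their states satisfying: if $(s,t)\in R$ and $s\to s'$ then there is $t'$ with $t\to t'$ and $(s',t')\in R$; and if $(s,t)\in R$ and $t\to t'$ then there is $s'$ with $s\to s'$ and $(s',t')\in R$. Two states $s,t$ of a system are path-equivalent, $s\sim t$, if for all states $u$: $s\to^*u\iff t\to^*u$ and $u\to^*s\iff u\to^*t$ ($\to^*$ the reflexive-transitive closure). A functional bisimulation between $\mathscr{M}$ and $\mathscr{N}$ is a pair of simulations $f:\mathscr{M}\to\mathscr{N}$, $g:\mathscr{N}\to\mathscr{M}$ with $gf(s)\sim s$ for all states $s$ of $\mathscr{M}$ and $fg(t)\sim t$ for all states $t$ of $\mathscr{N}$. Every functional bisimulation yields a relational bisimulation. *)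

From Stdlib Require Import Relations.

Record RTS : Type := mkRTS {
  state : Type;
  trans : state -> state -> Prop;
  init : state
}.

Definition simulation (M N : RTS) (f : state M -> state N) : Prop :=
  (forall s s', trans M s s' -> trans N (f s) (f s')) /\ f (init M) = init N.

Definition rel_bisimulation (M N : RTS) (R : state M -> state N -> Prop) : Prop :=
  (forall s t s', R s t -> trans M s s' -> exists t', trans N t t' /\ R s' t') /\
  (forall s t t', R s t -> trans N t t' -> exists s', trans M s s' /\ R s' t').

Definition path_equiv (M : RTS) (s t : state M) : Prop :=
  forall u : state M,
    (clos_refl_trans _ (trans M) s u <-> clos_refl_trans _ (trans M) t u) /\
    (clos_refl_trans _ (trans M) u s <-> clos_refl_trans _ (trans M) u t).

Definition functional_bisimulation (M N : RTS)
    (f : state M -> state N) (g : state N -> state M) : Prop :=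
  simulation M N f /\ simulation N M g /\
  (forall s, path_equiv M (g (f s)) s) /\
  (forall t, path_equiv N (f (g t)) t).

Definition L_sys : RTS := mkRTS unit (fun _ _ => True) tt.

(* The 2-cycle C: states x = true, y = false; x -> y, y -> x; initial x. *)
Definition C_sys : RTS := mkRTS bool (fun s s' => s' = negb s) true.

Definition R_LC : state L_sys -> state C_sys -> Prop := fun _ _ => True.


(* Every state of either system has a successor, so the total relation R is a
   bisimulation. But a simulation carries the loop a -> a to a loop f a -> f a,
   and the two-cycle has no loop; hence there is not even a simulation from L
   to C, let alone a functional bisimulation. *)

Lemma rel_bisimulation_total (M N : RTS) :
  (forall s, exists s', trans M s s') ->
  (forall t, exists t', trans N t t') ->
  rel_bisimulation M N (fun _ _ => True).
Proof.
  intros serialM serialN; split.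
  - intros s t _ _ _. destruct (serialN t) as [t' Htt']. now exists t'.
  - intros s t _ _ _. destruct (serialM s) as [s' Hss']. now exists s'.
Qed.

Lemma simulation_loop (M N : RTS) (f : state M -> state N) (s : state M) :
  simulation M N f -> trans M s s -> trans N (f s) (f s).
Proof. intros [Hf _] Hss. exact (Hf s s Hss). Qed.

Lemma C_sys_loopfree (t : state C_sys) : ~ trans C_sys t t.
Proof. destruct t; discriminate. Qed.

Lemma no_simulation_L_C (f : state L_sys -> state C_sys) :
  ~ simulation L_sys C_sys f.
Proof.
  intros Hf. exact (C_sys_loopfree _ (simulation_loop L_sys C_sys f tt Hf I)).
Qed.

Theorem mainTheorem3 :
  rel_bisimulation L_sys C_sys R_LC /\ R_LC (init L_sys) (init C_sys) /\
  ~ (exists (f : state L_sys -> state C_sys) (g : state C_sys -> state L_sys),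
        functional_bisimulation L_sys C_sys f g).
Proof.
  split; [| split].
  - apply rel_bisimulation_total.
    + intros s. now exists tt.
    + intros t. now exists (negb t).
  - exact I.
  - intros [f [g [Hf _]]]. exact (no_simulation_L_C f Hf).
Qed.
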